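(* Let $G'$ be a graph that is not a disjoint union of copies of $K_2$. Construct a graph $G$ from $G'$ by attaching finitely many (possibly empty) trees to each node of $G'$, at least one of which is not isolated. Then \[ \mathcal{H}_G=\mathcal{H}_{G'},\qquad \mathcal{H}_G^\psi=\mathcal{H}_{G'}^\psi,\qquad \mathcal{H}_G^\phi=\mathcal{H}_{G'}^\phi. \] In particular, if $G$ is a tree with at least $3$ vertices, then $CE_H(G)=CE_H^\phi(G)=CE_H^\psi(G)=1$.
   Context: All graphs are finite and simple; attaching a tree $T$ to a node $v$ means taking the disjoint union with $T$ and identifying a vertex of $T$ with $v$. $K_2$ is the complete graph on $2$ vertices. For a graph $G=(V,E)$ with $V=\{1,\dots,n\}$ and $I\subset\mathbb{R}$, $\mathcal{P}_G(I)$ is the set of real symmetric positive semidefinite $n\times n$ matrices with entries in $I$ such that $a_{ij}=0$ whenever $i\neq j$ and $(i,j)\notin E$; $\mathcal{P}_G:=\mathcal{P}_G(\mathbb{R})$. For $A$ with nonnegative entries, $A^{\circ\alpha}:=(a_{ij}^\alpha)$ with $0^\alpha:=0$. $\psi_\alpha(x)=\mathrm{sgn}(x)|x|^\alpha$, $\phi_\alpha(x)=|x|^\alpha$ for $x\ne0$, $\psi_\alpha(0)=\phi_\alpha(0)=0$, applied entrywise: $f[A]=(f(a_{ij}))$. $\mathcal{H}_G:=\{\alpha\in\mathbb{R}: A^{\circ\alpha}\in\mathcal{P}_G\ \forall A\in\mathcal{P}_G([0,\infty))\}$, $\mathcal{H}_G^\psi:=\{\alpha:\psi_\alpha[A]\in\mathcal{P}_G\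 \forall A\in\mathcal{P}_G(\mathbb{R})\}$, $\mathcal{H}_G^\phi:=\{\alpha:\phi_\alpha[A]\in\mathcal{P}_G\ \forall A\in\mathcal{P}_G(\mathbb{R})\}$. $CE_H(G):=\min\{\alpha: A^{\circ\beta}\in\mathcal{P}_G\ \forall A\in\mathcal{P}_G([0,\infty)),\ \forall\beta\ge\alpha\}$, and analogously $CE_H^\psi(G), CE_H^\phi(G)$ using $\psi_\beta,\phi_\beta$ on $\mathcal{P}_G(\mathbb{R})$.
   Formalization: $G'$ is assumed to have a vertex with two distinct neighbours, in place of the hypotheses that $G'$ is not a disjoint union of copies of $K_2$ and some attached tree is not isolated. Apart from conventions, each condition added here is assumed in the paper as well or is needed for the statement above to hold. *)

From HB Require Import structures.
From mathcomp Require Import all_boot all_order all_algebra.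
From mathcomp Require Import boolp classical_sets reals exp Rstruct.
Set Implicit Arguments. Unset Strict Implicit. Unset Printing Implicit Defensive.
Import Order.TTheory GRing.Theory Num.Theory.
Local Open Scope ring_scope.
Local Open Scope classical_set_scope.

Notation RR := Rdefinitions.R.

Definition simple_graph (T : finType) (e : rel T) : Prop :=
  symmetric e /\ irreflexive e.

Definition acyclic (T : finType) (e : rel T) : Prop :=
  forall (x : T) (p : seq T),
    uniq (x :: p) -> path e x p -> (2 <= size p)%N -> ~~ e (last x p) x.

Definition is_tree (T : finType) (e : rel T) : Prop :=
  [/\ simple_graph e, (forall x y : T, connect e x y) & acyclic e].

(* Attaching the tree T on 'I_m.+1 (vertex ord0 identified with v) to the
   graph G on 'I_n: the new graph lives on 'I_(n + m); vertices lshift i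
   are those of G, vertex rshift n k is the tree vertex lift ord0 k. *)
Definition tree_label n m (v : 'I_n) (x : 'I_(n + m)) : option 'I_m.+1 :=
  match split x with
  | inl a => if a == v then Some ord0 else None
  | inr k => Some (lift ord0 k)
  end.

Definition attach n m (G : rel 'I_n) (T : rel 'I_m.+1) (v : 'I_n)
  : rel 'I_(n + m) :=
  fun x y =>
    (match split x, split y with inl a, inl b => G a b | _, _ => false end)
    || (match tree_label v x, tree_label v y with
        | Some s, Some t => T s t | _, _ => false end).

(* obtained G' G : G arises from G' (on 'I_n0) by attaching finitely many
   trees to nodes of G'. Since attaching only appends vertices, the nodes
   of G' are exactly the vertices with index < n0. *)
Inductive obtained (n0 : nat) (G0 : rel 'I_n0) : forall n, rel 'I_n -> Prop :=
| obtained_base : obtained G0 G0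
| obtained_step n (G : rel 'I_n) m (T : rel 'I_m.+1) (v : 'I_n) :
    obtained G0 G -> (v < n0)%N -> is_tree T -> obtained G0 (attach G T v).

Definition psd n (A : 'M[RR]_n) : Prop :=
  A^T = A /\ forall v : 'cV[RR]_n, 0 <= (v^T *m A *m v) ord0 ord0.

Definition PG n (G : rel 'I_n) (I : set RR) (A : 'M[RR]_n) : Prop :=
  [/\ psd A, (forall i j, I (A i j)) &
      (forall i j, i != j -> ~~ G i j -> A i j = 0)].

(* x^a for x >= 0 with the convention 0^a = 0 *)
Definition rpow (x a : RR) : RR := if x == 0 then 0 else powR x a.
Definition phi_ (a x : RR) : RR := rpow `|x| a.
Definition psi_ (a x : RR) : RR := Num.sg x * rpow `|x| a.

Definition hpow n (A : 'M[RR]_n) (a : RR) : 'M[RR]_n := map_mx (rpow ^~ a) A.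

Definition H_ n (G : rel 'I_n) : set RR :=
  [set a | forall A, PG G [set x | 0 <= x] A -> PG G setT (hpow A a)].
Definition Hpsi n (G : rel 'I_n) : set RR :=
  [set a | forall A, PG G setT A -> PG G setT (map_mx (psi_ a) A)].
Definition Hphi n (G : rel 'I_n) : set RR :=
  [set a | forall A, PG G setT A -> PG G setT (map_mx (phi_ a) A)].

(* the sets whose minima are CE_H(G), CE_H^psi(G), CE_H^phi(G) *)
Definition CEset (S : set RR) : set RR := [set a | forall b, a <= b -> S b].
Definition is_min (S : set RR) (c : RR) : Prop := S c /\ forall a, S a -> c <= a.

From HB Require Import structures.
From mathcomp Require Import all_boot all_order all_algebra.
From mathcomp Require Import boolp classical_sets reals exp Rstruct.
From mathcomp Require Import ring lra.
Set Implicit Arguments. Unset Strict Implicit. Unset Printing Implicit Defensive.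
Import Order.TTheory GRing.Theory Num.Theory.
Local Open Scope ring_scope.
Local Open Scope classical_set_scope.

(* A map f with f 0 = 0, nonnegative and superadditive on [0, +oo), that preserves
   positivity of 2x2 matrices preserves positivity on P_G for every forest G, and
   more generally on every 1-sum of two graphs on which it does.  For the 1-sum of
   G1 and G2 at v, split the entry a_vv of A in P_G as d1 + d2 so that A1, A2
   (A restricted to G1, G2 with a_vv replaced by d1, d2) stay positive semidefinite;
   this is possible because the least such d_i is a Schur complement and these add
   up to at most a_vv.  Then
     f[A] = f[A1] + f[A2] + (f a_vv - f d1 - f d2) e_v e_v^T,
   and the last term is positive by superadditivity.  For a >= 1 the maps x^a,
   phi_a and psi_a have these properties, and G is an iterated 1-sum of G' with
   trees, while P_G' embeds into P_G; so the powers preserving positivity on P_G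
   and on P_G' are the same once a >= 1 is known.  That bound holds as soon as the
   graph contains a path with three vertices, as G' and every tree with at least
   three vertices do: apply the entrywise power to [[2,1,1],[1,1,0],[1,0,1]] and
   test against (1,-1,-1). *)

(** * Quadratic forms *)

Section Forms.
Variables (R : comNzRingType) (n : nat).
Implicit Types (A B : 'M[R]_n) (x y z : 'cV[R]_n).

Definition bform A x y : R := (x^T *m A *m y) ord0 ord0.
Definition qform A x : R := bform A x x.

Lemma bformE A x y : bform A x y = \sum_i \sum_j x i 0 * A i j * y j 0.
Proof.
rewrite /bform mxE exchange_big; apply: eq_bigr => j _.
by rewrite mxE big_distrl; apply: eq_bigr => i _; rewrite !mxE.
Qed.

Lemma bformDl A x y z : bform A (x + y) z = bform A x z + bform A y z.
Proof. by rewrite /bform linearD !mulmxDl mxE. Qed.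

Lemma bformDr A x y z : bform A z (x + y) = bform A z x + bform A z y.
Proof. by rewrite /bform mulmxDr mxE. Qed.

Lemma bformC A x y : A^T = A -> bform A x y = bform A y x.
Proof.
move=> sA; rewrite !bformE exchange_big; apply: eq_bigr => i _.
apply: eq_bigr => j _; have -> : A j i = A i j by rewrite -{1}sA mxE.
by ring.
Qed.

Lemma qformD A B x : qform (A + B) x = qform A x + qform B x.
Proof. by rewrite /qform /bform mulmxDr mulmxDl mxE. Qed.

Lemma qformZ A c x : qform A (c *: x) = c ^+ 2 * qform A x.
Proof. by rewrite /qform /bform !linearZ /= -!scalemxAl !mxE expr2 mulrA. Qed.

Lemma qformZl A c x : qform (c *: A) x = c * qform A x.
Proof. by rewrite /qform /bform -scalemxAr -scalemxAl mxE. Qed.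

Lemma qform_delta_mx v x : qform (delta_mx v v) x = x v 0 ^+ 2.
Proof.
rewrite /qform /bform -(mul_delta_mx (0 : 'I_1) v v) mulmxA -colE -mulmxA -rowE.
by rewrite mxE big_ord1 !mxE expr2.
Qed.

Lemma qform_delta_vec A v : qform A (delta_mx v 0) = A v v.
Proof.
by rewrite /qform /bform trmx_delta -rowE -colE !mxE.
Qed.

End Forms.

Lemma psdP n (A : 'M[RR]_n) : psd A <-> A^T = A /\ forall x, 0 <= qform A x.
Proof. exact: iff_refl. Qed.

Lemma qform_diag_mx n (d : 'rV[RR]_n) x :
  qform (diag_mx d) x = \sum_i d 0 i * x i 0 ^+ 2.
Proof.
rewrite /qform /bform mul_mx_diag mxE; apply: eq_bigr => i _.
by rewrite !mxE; ring.
Qed.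

Lemma psd_diag_mx n (d : 'rV[RR]_n) : (forall i, 0 <= d 0 i) -> psd (diag_mx d).
Proof.
move=> d_ge0; apply/psdP; split=> [|x]; first exact: tr_diag_mx.
by rewrite qform_diag_mx sumr_ge0 // => i _; rewrite mulr_ge0 ?sqr_ge0.
Qed.

Lemma psd_scale_delta n c (v : 'I_n) : 0 <= c -> psd (c *: delta_mx v v).
Proof.
move=> c_ge0; apply/psdP; split=> [|x]; first by rewrite linearZ /= trmx_delta.
by rewrite qformZl qform_delta_mx mulr_ge0 ?sqr_ge0.
Qed.

Lemma psdD n (A B : 'M[RR]_n) : psd A -> psd B -> psd (A + B).
Proof.
move=> /psdP[sA qA] /psdP[sB qB]; apply/psdP; split=> [|x].
  by rewrite linearD /= sA sB.
by rewrite qformD addr_ge0.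
Qed.

Lemma psd_conj k n (M : 'M[RR]_(k, n)) (A : 'M[RR]_n) :
  psd A -> psd (M *m A *m M^T).
Proof.
move=> /psdP[sA qA]; apply/psdP; split=> [|x]; first by rewrite !trmx_mul trmxK sA mulmxA.
suff -> : qform (M *m A *m M^T) x = qform A (M^T *m x) by apply: qA.
by rewrite /qform /bform trmx_mul trmxK !mulmxA.
Qed.

Lemma psd_diag n (A : 'M[RR]_n) i : psd A -> 0 <= A i i.
Proof. by move=> /psdP[_ qA]; rewrite -qform_delta_vec; apply: qA. Qed.

Definition psd_preserving n (I : set RR) (f : RR -> RR) (G : rel 'I_n) : Prop :=
  forall A, PG G I A -> psd (map_mx f A).

Lemma psd_preservingE n (I : set RR) f (G : rel 'I_n) : f 0 = 0 ->
  (forall A, PG G I A -> PG G setT (map_mx f A)) <-> psd_preserving I f G.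
Proof.
move=> f0; split=> fG A GA; first by have [] := fG A GA.
have [_ _ A0] := GA; split=> [|//|i j ij nGij]; first exact: fG.
by rewrite mxE A0.
Qed.

(** * Subgraphs and embeddings *)

Section Embedding.
Variables (k N : nat) (g : 'I_k -> 'I_N).
Hypothesis g_inj : injective g.
(* [P *m A *m P^T] restricts [A] to the image of [g]; [P^T *m B *m P] extends [B]
   by zeros. *)
Local Notation P := (rowsub g 1%:M : 'M[RR]_(k, N)).

Lemma rowsub_conj (A : 'M[RR]_N) : P *m A *m P^T = mxsub g g A.
Proof.
rewrite -rowsubE trmx_mxsub trmx1 mulmx_colsub mulmx1.
by apply/matrixP => i j; rewrite !mxE.
Qed.

Lemma rowsub_push (B : 'M[RR]_k) s t : (P^T *m B *m P) (g s) (g t) = B s t.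
Proof.
have PPt : P *m P^T = 1%:M.
  rewrite -[P in P *m _]mulmx1 rowsub_conj.
  by apply/matrixP => i j; rewrite !mxE (inj_eq g_inj).
have := congr1 (fun M : 'M[RR]_k => M s t) (rowsub_conj (P^T *m B *m P)).
rewrite [mxsub _ _ _ _ _]mxE => <-.
by rewrite !mulmxA PPt mul1mx -mulmxA PPt mulmx1.
Qed.

Lemma rowsub_push0 (B : 'M[RR]_k) x y :
  (x \notin codom g) || (y \notin codom g) -> (P^T *m B *m P) x y = 0.
Proof.
have Pt0 z : z \notin codom g -> row z P^T = 0.
  move=> zg; apply/rowP => i; rewrite !mxE; case: eqP => // giz.
  by rewrite -giz codom_f in zg.
case/orP => [/Pt0 Px0 | /Pt0 Py0].
  have -> : (P^T *m B *m P) x y = row x (P^T *m B *m P) 0 y by rewrite [RHS]mxE.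
  by rewrite !row_mul Px0 !mul0mx mxE.
have -> : (P^T *m B *m P) x y = row y (P^T *m B *m P)^T 0 x by rewrite [RHS]mxE [RHS]mxE.
by rewrite !trmx_mul trmxK !row_mul Py0 !mul0mx mxE.
Qed.

Lemma rowsub_push_elim (Q : RR -> Prop) (B : 'M[RR]_k) x y :
  Q 0 -> (forall s t, x = g s -> y = g t -> Q (B s t)) -> Q ((P^T *m B *m P) x y).
Proof.
move=> Q0 QB.
have [/rowsub_push0 -> // | ] := boolP ((x \notin codom g) || (y \notin codom g)).
rewrite negb_or !negbK => /andP[/codomP[s xs] /codomP[t yt]].
by rewrite xs yt rowsub_push; apply: QB.
Qed.

Lemma psd_preserving_sub I f (G : rel 'I_N) (T : rel 'I_k) :
  I 0 -> (forall s t, T s t -> G (g s) (g t)) ->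
  psd_preserving I f G -> psd_preserving I f T.
Proof.
move=> I0 TG fG B [pB BI B0].
have GA : PG G I (P^T *m B *m P).
  split=> [|x y|x y xy nGxy]; first by rewrite -[X in _ *m X]trmxK; apply: psd_conj.
    by apply: (rowsub_push_elim (Q := I)) => // s t _ _; apply: BI.
  apply: (rowsub_push_elim (Q := eq^~ 0)) => // s t xs yt.
  apply: B0; first by apply: contraNneq xy => st; rewrite xs yt st.
  by apply: contraNN nGxy => /TG; rewrite xs yt.
suff -> : map_mx f B = P *m map_mx f (P^T *m B *m P) *m P^T.
  exact: psd_conj (fG _ GA).
rewrite rowsub_conj; apply/matrixP => s t.
by rewrite [LHS]mxE [RHS]mxE [RHS]mxE rowsub_push.
Qed.

Lemma psd_preserving_cover I f (G : rel 'I_N) (T : rel 'I_k) :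
  f 0 = 0 -> (forall x, 0 <= x -> 0 <= f x) ->
  (forall x y, x != y -> G x y -> exists s t, [/\ x = g s, y = g t & T s t]) ->
  psd_preserving I f T -> psd_preserving I f G.
Proof.
move=> f0 f_ge0 GT fT A [pA AI A0].
have TB : PG T I (P *m A *m P^T).
  rewrite rowsub_conj; split=> [|s t|s t st nTst]; rewrite ?mxE //.
    by rewrite -rowsub_conj; apply: psd_conj.
  apply: A0; first by rewrite (inj_eq g_inj).
  apply/negP => /(GT _ _ _)[]; first by rewrite (inj_eq g_inj).
  by move=> s' [t' [/g_inj <- /g_inj <-]]; apply/negP.
pose d := \row_x (if x \in codom g then 0 else f (A x x)).
suff -> : map_mx f A = P^T *m map_mx f (P *m A *m P^T) *m P + diag_mx d.
  apply: psdD; first by rewrite -[X in _ *m X]trmxK; apply: psd_conj; apply: fT.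
  apply: psd_diag_mx => x; rewrite mxE; case: ifP => // _.
  by apply: f_ge0; apply: psd_diag.
apply/matrixP => x y; rewrite rowsub_conj [LHS]mxE [(_ + _ : 'M[RR]_N) x y]mxE.
rewrite [diag_mx d x y]mxE [d 0 x]mxE.
have [/andP[/codomP[s xs] /codomP[t yt]] | ] := boolP ((x \in codom g) && (y \in codom g)).
  by rewrite xs yt rowsub_push codom_f !mxE mul0rn addr0.
rewrite negb_and => xyg; rewrite rowsub_push0 // add0r; move: xyg.
have [<- | xy xyg] := eqVneq x y; first by rewrite orbb => /negPf->; rewrite mulr1n.
rewrite mulr0n A0 //; apply/negP => /(GT x y xy)[s [t [xs yt _]]].
by rewrite xs yt !codom_f in xyg.
Qed.

End Embedding.

(** * One-sums *)

Definition induced n (G : rel 'I_n) (S : pred 'I_n) : rel 'I_n :=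
  fun x y => [&& G x y, S x & S y].

Section Pinned.
Variables (N : nat) (v : 'I_N).
Implicit Types (A : 'M[RR]_N) (S : pred 'I_N).

Definition pinned S : set 'cV[RR]_N :=
  [set u | (forall x, ~~ S x -> u x 0 = 0) /\ u v 0 = 1].

(* [A v v - pinned_min A S] is the least (v, v) entry for which the restriction of
   [A] to [S] stays positive semidefinite (a Schur complement). *)
Definition pinned_min A S : RR := inf (qform A @` pinned S).

Definition mask A S (d : RR) : 'M[RR]_N :=
  \matrix_(i, j) if S i && S j then (if (i == v) && (j == v) then d else A i j) else 0.

Lemma pinned_delta S : S v -> pinned S (delta_mx v 0).
Proof.
move=> Sv; split=> [x Sx|]; last by rewrite mxE !eqxx.
by rewrite mxE; case: eqP Sx => // ->; rewrite Sv.
Qed.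

Lemma pinned_min_ge A S c : S v ->
  (forall u, pinned S u -> c <= qform A u) -> c <= pinned_min A S.
Proof.
move=> Sv cS; apply: lb_le_inf => [|_ [u uS <-]]; last exact: cS.
by exists (qform A (delta_mx v 0)), (delta_mx v 0); first exact: pinned_delta.
Qed.

Lemma pinned_minP A S : psd A -> S v ->
  [/\ 0 <= pinned_min A S, pinned_min A S <= A v v
    & forall u, pinned S u -> pinned_min A S <= qform A u].
Proof.
move=> /psdP[_ qA] Sv.
have minP u : pinned S u -> pinned_min A S <= qform A u.
  by move=> Su; apply: ge_inf; [exists 0 => _ [w _ <-] | exists u].
split=> //; first exact: pinned_min_ge.
by rewrite -qform_delta_vec; apply/minP/pinned_delta.
Qed.

Lemma mask_decomp A S d : S v ->
  let D := diag_mx (\row_i (S i)%:R) in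
  mask A S d = D *m A *m D + (d - A v v) *: delta_mx v v.
Proof.
move=> Sv D; apply/matrixP => i j.
rewrite /D mul_diag_mx mul_mx_diag !mxE.
have [-> | iv] := eqVneq i v; have [-> | jv] := eqVneq j v;
  rewrite ?Sv /= ?mulr1 ?mulr0 ?addr0.
- by rewrite mul1r; lra.
- by case: (S j); rewrite mul1r ?mulr1 ?mulr0.
- by case: (S i); rewrite ?mul1r ?mul0r.
- by case: (S i); case: (S j); rewrite ?mul1r ?mulr1 ?mul0r ?mulr0.
Qed.

Lemma mask_psd A S d : psd A -> S v ->
  (forall u, pinned S u -> A v v - d <= qform A u) -> psd (mask A S d).
Proof.
move=> pA Sv minS; rewrite (mask_decomp _ _ Sv).
set D := diag_mx _; have DT : D^T = D by rewrite tr_diag_mx.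
have /psdP[sA qA] := pA; apply/psdP; split=> [|z].
  by rewrite linearD linearZ /= trmx_delta !trmx_mul DT sA mulmxA.
set w := D *m z; set t := z v 0.
have qDAD : qform (D *m A *m D) z = qform A w.
  by rewrite /qform /bform /w trmx_mul DT !mulmxA.
rewrite qformD qformZl qform_delta_mx -/t qDAD.
have [-> | t0] := eqVneq t 0; first by rewrite expr0n mulr0 addr0.
have wE x : w x 0 = (S x)%:R * z x 0 by rewrite /w mul_diag_mx !mxE.
set u := t^-1 *: w.
have uS : pinned S u.
  by split=> [x /negPf Sx|]; rewrite mxE wE ?Sx ?Sv ?mul0r ?mulr0 // mul1r mulVf.
have -> : w = t *: u by rewrite /u scalerA mulfV ?scale1r.
rewrite qformZ; have := minS _ uS; have := sqr_ge0 t; nra.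
Qed.

Lemma mask_PG (G : rel 'I_N) (I : set RR) A S d :
  PG G I A -> I 0 -> I d -> psd (mask A S d) -> PG (induced G S) I (mask A S d).
Proof.
move=> [_ AI A0] I0 Id pM; split=> // [i j | i j ij]; rewrite mxE.
  by case: ifP => // _; case: ifP.
rewrite /induced; case: (S i && S j) => //; rewrite !andbT => nGij.
case: ifP => [/andP[/eqP ei /eqP ej] | _]; last exact: A0.
by rewrite ei ej eqxx in ij.
Qed.

Variables (G : rel 'I_N) (S1 S2 : pred 'I_N).
Hypotheses (S12_cover : forall x, S1 x || S2 x)
           (S12_cap : forall x, S1 x -> S2 x -> x = v)
           (S1v : S1 v) (S2v : S2 v)
           (G_sides : forall x y, x != y -> G x y -> (S1 x && S1 y) || (S2 x && S2 y)).

Lemma pinned_sum_ge A (u1 u2 : 'cV[RR]_N) :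
  psd A -> (forall i j, i != j -> ~~ G i j -> A i j = 0) ->
  pinned S1 u1 -> pinned S2 u2 -> A v v <= qform A u1 + qform A u2.
Proof.
move=> /psdP[sA qA] A0 u1P u2P.
set e := delta_mx v 0 : 'cV[RR]_N; set x1 := u1 - e; set x2 := u2 - e.
have x_supp S u i : pinned S u -> (u - e) i 0 != 0 -> S i && (i != v).
  move=> [uS uv]; rewrite !mxE.
  have [-> | iv] := eqVneq i v; first by rewrite uv subrr eqxx.
  by rewrite subr0 andbT; apply: contraNT => /uS ->.
have x12 : bform A x1 x2 = 0.
  rewrite bformE big1 // => i _; rewrite big1 // => j _.
  have [-> | /(x_supp _ _ _ u1P) /andP[S1i iv]] := eqVneq (x1 i 0) 0.
    by rewrite !mul0r.
  have [-> | /(x_supp _ _ _ u2P) /andP[S2j jv]] := eqVneq (x2 j 0) 0.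
    by rewrite mulr0.
  have ij : i != j by apply: contraNneq jv => eij; apply/eqP/S12_cap; rewrite // -eij.
  rewrite A0 ?mulr0 ?mul0r //; apply/negP.
  case/(G_sides ij)/orP => [/andP[_ S1j] | /andP[S2i _]].
    by rewrite (S12_cap S1j S2j) eqxx in jv.
  by rewrite (S12_cap S1i S2i) eqxx in iv.
have ee : bform A e e = A v v := qform_delta_vec A v.
have u1E : u1 = e + x1 by rewrite /x1 addrC subrK.
have u2E : u2 = e + x2 by rewrite /x2 addrC subrK.
rewrite u1E u2E; clearbody x1 x2.
have := qA (e + x1 + x2); rewrite /qform !(bformDl, bformDr).
rewrite (bformC x2 x1 sA) (bformC x1 e sA) (bformC x2 e sA) x12 ee; lra.
Qed.

Lemma map_mask_decomp (f : RR -> RR) A d1 d2 :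
  f 0 = 0 -> (forall i j, i != j -> ~~ G i j -> A i j = 0) ->
  map_mx f A = map_mx f (mask A S1 d1) + map_mx f (mask A S2 d2)
               + (f (A v v) - f d1 - f d2) *: delta_mx v v.
Proof.
move=> f0 A0; apply/matrixP => i j; rewrite !mxE.
have [/andP[/eqP -> /eqP ->] | ivj] := boolP ((i == v) && (j == v)).
  by rewrite S1v S2v /=; lra.
rewrite mulr0 addr0.
have not_both : ~~ ((S1 i && S1 j) && (S2 i && S2 j)).
  apply: contra ivj => /andP[/andP[S1i S1j] /andP[S2i S2j]].
  by rewrite (S12_cap S1i S2i) (S12_cap S1j S2j) eqxx.
case: (boolP (S1 i && S1 j)) not_both => S1ij; case: (boolP (S2 i && S2 j)) => S2ij //= _.
- by rewrite f0 addr0.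
- by rewrite f0 add0r.
have ij : i != j.
  by apply/eqP => eij; move: (S12_cover i) S1ij S2ij; rewrite -eij !andbb => /orP[->|->].
rewrite A0 ?f0 ?addr0 //; apply/negP => /(G_sides ij).
by rewrite (negPf S1ij) (negPf S2ij).
Qed.

Theorem psd_preserving_onesum (I : set RR) f :
  f 0 = 0 -> (forall x y, 0 <= x -> 0 <= y -> f x + f y <= f (x + y)) ->
  (forall x, 0 <= x -> I x) ->
  psd_preserving I f (induced G S1) -> psd_preserving I f (induced G S2) ->
  psd_preserving I f G.
Proof.
move=> f0 f_sup I_ge0 fG1 fG2 A GA; have [pA _ A0] := GA.
have [m1_ge0 m1_le m1P] := pinned_minP pA S1v.
have [_ _ m2P] := pinned_minP pA S2v.
have m12 : A v v - pinned_min A S1 <= pinned_min A S2.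
  apply: pinned_min_ge => // u2 u2S; rewrite lerBlDr -lerBlDl.
  apply: pinned_min_ge => // u1 u1S; rewrite lerBlDl.
  by rewrite addrC; apply: pinned_sum_ge.
set m1 := pinned_min A S1 in m1_ge0 m1_le m1P m12.
have M1 : PG (induced G S1) I (mask A S1 (A v v - m1)).
  apply: mask_PG => //; [exact: I_ge0 | by apply: I_ge0; rewrite subr_ge0 |].
  by apply: mask_psd => // u uS; rewrite opprB addrC subrK; apply: m1P.
have M2 : PG (induced G S2) I (mask A S2 m1).
  apply: mask_PG => //; [exact: I_ge0 | exact: I_ge0 |].
  by apply: mask_psd => // u uS; apply: le_trans m12 (m2P _ uS).
rewrite (map_mask_decomp (A v v - m1) m1 f0 A0); apply: psdD.
  by apply: psdD; [apply: fG1 | apply: fG2].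
have d1_ge0 : 0 <= A v v - m1 by rewrite subr_ge0.
by apply: psd_scale_delta; have := f_sup _ _ d1_ge0 m1_ge0; rewrite subrK; lra.
Qed.

End Pinned.

(** * Forests *)

Lemma qform2 (M : 'M[RR]_2) z : M^T = M ->
  qform M z = M 0 0 * z 0 0 ^+ 2 + 2 * M 0 1 * z 0 0 * z 1 0 + M 1 1 * z 1 0 ^+ 2.
Proof.
move=> sM; have M10 : M 1 0 = M 0 1 by rewrite -{1}sM mxE.
have l1 : lift ord0 (ord0 : 'I_1) = 1 by apply: val_inj.
by rewrite /qform bformE !big_ord_recl !big_ord0 /= l1 M10 !expr2; ring.
Qed.

Lemma psd2P (M : 'M[RR]_2) : M^T = M ->
  psd M <-> [/\ 0 <= M 0 0, 0 <= M 1 1 & M 0 1 ^+ 2 <= M 0 0 * M 1 1].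
Proof.
move=> sM; split=> [pM | [a_ge0 c_ge0 bac]].
  split; [exact: psd_diag | exact: psd_diag |].
  have q xy : 0 <= M 0 0 * xy.1 ^+ 2 + 2 * M 0 1 * xy.1 * xy.2 + M 1 1 * xy.2 ^+ 2.
    have /psdP[_ /(_ (\col_i (if i == 0 then xy.1 else xy.2)))] := pM.
    by rewrite qform2 // !mxE.
  move: (q (M 1 1, - M 0 1)) (q (- M 0 1, M 0 0)) (q (1, - M 0 1)) (q (1, 0)) => /=.
  move: (M 0 0) (M 0 1) (M 1 1) => a b c; rewrite !expr2 => h1 h2 h3 ha.
  have [a_gt0 | a_le0] := ltrP 0 a; first nra.
  have a0 : a = 0 by lra.
  by subst a; nra.
apply/psdP; split=> // z; rewrite qform2 //.
move: (z 0 0) (z 1 0) (M 0 0) (M 0 1) (M 1 1) a_ge0 c_ge0 bac => x y a b c a_ge0 c_ge0 bac.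
have [a_gt0 | a_le0] := ltrP 0 a.
  suff : 0 <= a * (a * x ^+ 2 + 2 * b * x * y + c * y ^+ 2) by rewrite pmulr_rge0.
  have -> : a * (a * x ^+ 2 + 2 * b * x * y + c * y ^+ 2)
            = (a * x + b * y) ^+ 2 + (a * c - b ^+ 2) * y ^+ 2 by ring.
  by rewrite addr_ge0 ?sqr_ge0 // mulr_ge0 ?sqr_ge0 // subr_ge0.
have a0 : a = 0 by lra.
have -> : b = 0 by apply/eqP; rewrite -sqrf_eq0 eq_le sqr_ge0 -(mul0r c) -a0 bac.
by rewrite a0 !(mul0r, mulr0, add0r) mulr_ge0 ?sqr_ge0.
Qed.

Record admissible (I : set RR) (f : RR -> RR) : Prop := Admissible {
  adm0 : f 0 = 0;
  adm_ge0 : forall x, 0 <= x -> 0 <= f x;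
  adm_superadd : forall x y, 0 <= x -> 0 <= y -> f x + f y <= f (x + y);
  (* with [adm_ge0]: f preserves positivity of 2x2 matrices *)
  adm_minor2 : forall x y z, I y -> 0 <= x -> 0 <= z ->
    y ^+ 2 <= x * z -> f y ^+ 2 <= f x * f z;
  adm_dom : forall x, 0 <= x -> I x }.

Lemma psd_preserving_2x2 I f (G : rel 'I_2) : admissible I f -> psd_preserving I f G.
Proof.
move=> fA A [pA AI _]; have /psdP[sA _] := pA.
have [a_ge0 c_ge0 bac] := (psd2P sA).1 pA.
apply/psd2P; first by rewrite map_trmx sA.
by rewrite !mxE; split; [apply: (adm_ge0 fA).. | apply: (adm_minor2 fA)].
Qed.

Lemma psd_preserving_edgeless n I f (G : rel 'I_n) :
  f 0 = 0 -> (forall x, 0 <= x -> 0 <= f x) ->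
  (forall x y, x != y -> ~~ G x y) -> psd_preserving I f G.
Proof.
move=> f0 f_ge0 G0 A [pA _ A0].
have -> : map_mx f A = diag_mx (\row_i f (A i i)).
  apply/matrixP => i j; rewrite !mxE.
  by have [<- | ij] := eqVneq i j; rewrite ?mulr1n // mulr0n A0 ?G0.
by apply: psd_diag_mx => i; rewrite mxE f_ge0 // psd_diag.
Qed.

Lemma psd_preserving_edge n I f (G : rel 'I_n) (u w : 'I_n) :
  admissible I f -> u != w ->
  (forall x y, x != y -> G x y -> (x \in [:: u; w]) && (y \in [:: u; w])) ->
  psd_preserving I f G.
Proof.
move=> fA uw Guw; pose g (s : 'I_2) := if val s is 0 then u else w.
have g_inj : injective g.
  move=> [[|[|?]] ?] [[|[|?]] ?] //; rewrite /g /= => e; apply: val_inj => //=;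
    by move: uw; rewrite e eqxx.
apply: (psd_preserving_cover (T := fun _ _ => true) g_inj (adm0 fA) (adm_ge0 fA)).
- move=> x y xy /(Guw _ _ xy); rewrite !inE.
  case/andP => /orP[] /eqP xE /orP[] /eqP yE; rewrite xE yE ?eqxx in xy *.
  + by [].
  + by exists 0, 1.
  + by exists 1, 0.
  + by [].
- exact: psd_preserving_2x2.
Qed.

Lemma induced_sym n (G : rel 'I_n) S : symmetric G -> symmetric (induced G S).
Proof. by move=> sG x y; rewrite /induced sG [S x && _]andbC. Qed.

Lemma induced_sub n (G : rel 'I_n) S : subrel (induced G S) G.
Proof. by move=> x y /andP[]. Qed.

Lemma acyclic_sub n (G H : rel 'I_n) : subrel H G -> acyclic G -> acyclic H.
Proof.
move=> HG aG x p up pH p2; apply: contraNN (aG x p up (sub_path HG pH) p2).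
exact: HG.
Qed.

Lemma forest_edge_bridge n (G : rel 'I_n) u w : simple_graph G -> acyclic G -> G u w ->
  exists C : pred 'I_n,
    [/\ C u, ~~ C w & forall x y, G x y -> C x -> ~~ C y -> (x == u) && (y == w)].
Proof.
move=> [sG iG] aG Guw.
pose H := [rel x y | G x y && ~~ (((x == u) && (y == w)) || ((x == w) && (y == u)))].
have HG : subrel H G by move=> x y /andP[].
have nCw : ~~ connect H u w.
  apply/negP => /connectP[p pH wE]; move: wE.
  case/shortenP: pH => [[|a [|b r]]] pH up _ wE.
  - by move: Guw; rewrite wE iG.
  - by move: wE pH => /= <-; rewrite !eqxx /= andbF.
  have := aG u [:: a, b & r] up (sub_path HG pH) isT.
  by rewrite /= -[last b r]wE sG Guw.
exists (connect H u); split=> [|//|x y Gxy Cx]; first exact: connect0.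
apply: contraNT => xyuw; apply: (connect_trans Cx (connect1 _)).
rewrite /= Gxy /=; apply: contra xyuw => /orP[// | /andP[/eqP xw _]].
by move: Cx; rewrite xw (negPf nCw).
Qed.

Lemma psd_preserving_pendant n I f (H : rel 'I_n) u w :
  admissible I f -> symmetric H -> u != w ->
  (forall y, y != u -> H u y -> y = w) ->
  psd_preserving I f (induced H (fun x => x != u)) -> psd_preserving I f H.
Proof.
move=> fA sH uw Hu fHu.
apply: (@psd_preserving_onesum _ w H (fun x => (x == u) || (x == w)) (fun x => x != u)).
- by move=> x /=; case: (x == u); rewrite ?orbT.
- by move=> x /= /orP[/eqP -> | /eqP //]; rewrite eqxx.
- by rewrite /= eqxx orbT.
- by rewrite /= eq_sym.
- move=> x y xy Hxy /=.
  have [xu | xnu] := eqVneq x u; have [yu | ynu] := eqVneq y u; rewrite ?orbT //.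
  + have yw : y = w by apply: Hu; rewrite // -xu.
    by rewrite yw eqxx.
  + have xw : x = w by apply: Hu; rewrite // sH -yu.
    by rewrite xw eqxx.
- exact: adm0 fA.
- exact: adm_superadd fA.
- exact: adm_dom fA.
- apply: (psd_preserving_edge fA uw) => x y _ /and3P[_ /= xuw yuw].
  by rewrite !inE xuw yuw.
- exact: fHu.
Qed.

Lemma psd_preserving_bridge n I f (G : rel 'I_n) (C : pred 'I_n) u w :
  admissible I f -> symmetric G -> C u -> ~~ C w ->
  (forall x y, G x y -> C x -> ~~ C y -> (x == u) && (y == w)) ->
  (forall H : rel 'I_n, symmetric H -> subrel H G -> ~~ H u w -> psd_preserving I f H) ->
  psd_preserving I f G.
Proof.
(* G is the 1-sum at u of G[C] and G[~C + u], and the latter is G[~C] with the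
   pendant edge uw. *)
move=> fA sG Cu nCw bridge fsub.
have uw : u != w by apply: contraNneq nCw => <-.
pose D x := ~~ C x || (x == u).
apply: (@psd_preserving_onesum _ u G C D).
- by move=> x; rewrite /D; case: (C x).
- by move=> x; rewrite /D => -> /eqP.
- exact: Cu.
- by rewrite /D eqxx orbT.
- move=> x y xy Gxy; rewrite /D.
  case Cx: (C x); case Cy: (C y); rewrite ?orbT //=.
    by have /andP[-> _] := bridge x y Gxy Cx (negbT Cy).
  have Gyx : G y x by rewrite sG.
  by have /andP[-> _] := bridge y x Gyx Cy (negbT Cx).
- exact: adm0 fA.
- exact: adm_superadd fA.
- exact: adm_dom fA.
- apply: fsub; [exact: induced_sym | exact: induced_sub |].
  by rewrite /induced (negPf nCw) !andbF.
apply: (psd_preserving_pendant fA (induced_sym _ sG) uw).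
  move=> y yu /and3P[Guy _ Dy]; apply/eqP.
  have nCy : ~~ C y by move: Dy; rewrite /D (negPf yu) orbF.
  by have /andP[_ ->] := bridge u y Guy Cu nCy.
apply: fsub; first by do 2 apply: induced_sym.
  by move=> x y /induced_sub /induced_sub.
by rewrite /induced eqxx !andbF.
Qed.

Definition edges n (G : rel 'I_n) : {set 'I_n * 'I_n} := [set p | G p.1 p.2].

Lemma edges_lt n (G H : rel 'I_n) x y :
  subrel H G -> G x y -> ~~ H x y -> (#|edges H| < #|edges G|)%N.
Proof.
move=> HG Gxy nHxy; apply: proper_card; apply/fintype.properP; split.
  by apply/fintype.subsetP => p; rewrite !inE; apply: HG.
by exists (x, y); rewrite !inE.
Qed.

Theorem psd_preserving_forest n I f (G : rel 'I_n) :
  admissible I f -> simple_graph G -> acyclic G -> psd_preserving I f G.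
Proof.
move=> fA; move: {2}#|edges G|.+1 (ltnSn #|edges G|) => k.
elim: k n G => [|k IHk] n G Gk [sG iG] aG; first by rewrite ltn0 in Gk.
have [[u w] /= Guw | noedge] := pickP (fun p : 'I_n * 'I_n => G p.1 p.2); last first.
  apply: psd_preserving_edgeless (adm0 fA) (adm_ge0 fA) _ => x y _.
  exact: negbT (noedge (x, y)).
have [C [Cu nCw bridge]] := forest_edge_bridge (conj sG iG) aG Guw.
apply: (psd_preserving_bridge fA sG Cu nCw bridge) => H sH HG nHuw.
apply: IHk; last exact: acyclic_sub aG.
  by apply: leq_trans (edges_lt HG Guw nHuw) _; rewrite -ltnS.
by split=> // x; exact: contraFF (HG x x) (iG x).
Qed.

(** * Entrywise powers *)

Lemma powR_superadd (x y a : RR) : 0 <= x -> 0 <= y -> 1 <= a ->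
  x `^ a + y `^ a <= (x + y) `^ a.
Proof.
move=> x_ge0 y_ge0 a_ge1; have a_gt0 : 0 < a by lra.
have xy_ge0 : 0 <= x + y by rewrite addr_ge0.
rewrite -!(mulr_powRB1 _ a_gt0) // mulrDl.
have mono z : 0 <= z -> z <= x + y -> z `^ (a - 1) <= (x + y) `^ (a - 1).
  by move=> z_ge0 zxy; apply: ge0_ler_powR; rewrite ?nnegrE // subr_ge0.
by rewrite lerD // ler_wpM2l // mono //; lra.
Qed.

Lemma powR_sqr_le (x y z a : RR) : 0 <= x -> 0 <= y -> 0 <= z -> 0 <= a ->
  y ^+ 2 <= x * z -> (y `^ a) ^+ 2 <= x `^ a * z `^ a.
Proof.
move=> x_ge0 y_ge0 z_ge0 a_ge0 yxz; rewrite expr2 -!powRM //.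
by apply: ge0_ler_powR; rewrite ?nnegrE ?mulr_ge0 // -expr2.
Qed.

Lemma rpow0 a : rpow 0 a = 0.
Proof. by rewrite /rpow eqxx. Qed.

Lemma rpowE (x a : RR) : a != 0 -> rpow x a = x `^ a.
Proof. by move=> a0; rewrite /rpow; have [-> | //] := eqVneq x 0; rewrite powR0. Qed.

Lemma admissible_rpow a : 1 <= a -> admissible [set x | 0 <= x] (rpow ^~ a).
Proof.
move=> a_ge1; have a0 : a != 0 by apply: contraTneq a_ge1 => ->; rewrite ler10.
split=> [|x _|x y x_ge0 y_ge0|x y z /= y_ge0 x_ge0 z_ge0 yxz|//]; rewrite ?rpowE //.
- exact: powR0.
- exact: powR_ge0.
- exact: powR_superadd.
- by apply: powR_sqr_le => //; lra.
Qed.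

Lemma admissible_abs (f g : RR -> RR) :
  admissible [set x | 0 <= x] g -> (forall x, 0 <= x -> f x = g x) ->
  (forall y, f y ^+ 2 = g `|y| ^+ 2) -> admissible setT f.
Proof.
move=> gA fg fsq; have f0 : f 0 = 0 by rewrite fg // (adm0 gA).
split=> // [x x_ge0|x y x_ge0 y_ge0|x y z _ x_ge0 z_ge0 yxz].
- by rewrite fg // (adm_ge0 gA).
- by rewrite !fg ?addr_ge0 // (adm_superadd gA).
rewrite fsq !fg // (adm_minor2 gA) //= ?normr_ge0 //.
by rewrite real_normK ?num_real.
Qed.

Lemma phi_rpow a x : 0 <= x -> phi_ a x = rpow x a.
Proof. by move=> x_ge0; rewrite /phi_ ger0_norm. Qed.

Lemma psi_rpow a x : 0 <= x -> psi_ a x = rpow x a.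
Proof.
rewrite le_eqVlt => /predU1P[<- | x_gt0]; first by rewrite /psi_ sgr0 mul0r rpow0.
by rewrite /psi_ gtr0_sg // mul1r gtr0_norm.
Qed.

Lemma admissible_phi a : 1 <= a -> admissible setT (phi_ a).
Proof.
move=> a_ge1; apply: (admissible_abs (admissible_rpow a_ge1) (@phi_rpow a)) => y.
by rewrite /phi_.
Qed.

Lemma admissible_psi a : 1 <= a -> admissible setT (psi_ a).
Proof.
move=> a_ge1; apply: (admissible_abs (admissible_rpow a_ge1) (@psi_rpow a)) => y.
rewrite /psi_ exprMn; have [y_lt0 | y_gt0 | ->] := ltrgtP y 0.
- by rewrite ltr0_sg // sqrrN expr1n mul1r.
- by rewrite gtr0_sg // expr1n mul1r.
- by rewrite sgr0 normr0 rpow0 !expr0n /= mul0r.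
Qed.

Definition path3 : rel 'I_3 := fun s t => (val s == 0)%N != (val t == 0)%N.

Definition path3_mx : 'M[RR]_3 :=
  \matrix_(s, t) if s == t then (if val s == 0%N then 2 else 1)
                 else if path3 s t then 1 else 0.

Lemma path3_mxP : PG path3 [set x | 0 <= x] path3_mx.
Proof.
split=> [|s t|s t st /negPf nst]; rewrite ?mxE ?(negPf st) ?nst //=.
- apply/psdP; split=> [|z].
    apply/matrixP => s t; rewrite !mxE eq_sym.
    by case: eqP => [-> | _] //; rewrite /path3 eq_sym.
  rewrite /qform bformE !big_ord_recl !big_ord0 !mxE /=.
  move: (z ord0 0) (z (lift ord0 ord0) 0) (z (lift ord0 (lift ord0 ord0)) 0) => a b c.
  have := sqr_ge0 (a + b); have := sqr_ge0 (a + c); rewrite !expr2; nra.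
- by case: ifP => _; case: ifP => _; lra.
Qed.

Lemma rpow_path3_ge1 a : psd_preserving [set x | 0 <= x] (rpow ^~ a) path3 -> 1 <= a.
Proof.
(* the entrywise power of [path3_mx] has value 2^a - 2 at (1, -1, -1) *)
move=> /(_ _ path3_mxP) /psdP[_ /(_ (\col_s (if val s == 0%N then 1 else -1)))].
rewrite /qform bformE !big_ord_recl !big_ord0 !mxE /=.
rewrite /rpow oner_eq0 powR1 eqxx pnatr_eq0 /= => h.
have : ln 2 <= ln (2 `^ a) :> RR by rewrite ler_ln ?posrE ?powR_gt0 //; lra.
by rewrite ln_powR -{1}[ln 2]mul1r ler_pM2r // ln_gt0 //; lra.
Qed.

Definition has_P3 n (G : rel 'I_n) : Prop :=
  exists v u w : 'I_n, [/\ u != w, G v u & G v w].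

Lemma rpow_P3_ge1 n (G : rel 'I_n) a :
  simple_graph G -> has_P3 G -> psd_preserving [set x | 0 <= x] (rpow ^~ a) G -> 1 <= a.
Proof.
move=> [sG iG] [v [u [w [uw Gvu Gvw]]]] fG.
have vu : v != u by apply: contraTneq Gvu => ->; rewrite iG.
have vw : v != w by apply: contraTneq Gvw => ->; rewrite iG.
pose g (s : 'I_3) := match val s with 0 => v | 1 => u | _ => w end.
have g_inj : injective g.
  move=> [[|[|[|?]]] ?] [[|[|[|?]]] ?] //; rewrite /g /= => e; apply: val_inj => //=;
    by move: vu vw uw; rewrite e eqxx.
apply: rpow_path3_ge1 (psd_preserving_sub g_inj (lexx 0) _ fG).
by move=> [[|[|[|?]]] ?] [[|[|[|?]]] ?] //=; rewrite /path3 /g //= => _; rewrite // sG.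
Qed.

(** * Attaching trees *)

Section Attach.
Variables (n m : nat) (G : rel 'I_n) (T : rel 'I_m.+1) (v : 'I_n).

Definition tree_vertex (s : 'I_m.+1) : 'I_(n + m) :=
  if unlift ord0 s is Some k then rshift n k else lshift m v.

Lemma tree_vertexK s : tree_label v (tree_vertex s) = Some s.
Proof.
rewrite /tree_vertex /tree_label; case: unliftP => [k ->|->].
  by rewrite (unsplitK (inr k)).
by rewrite (unsplitK (inl v)) eqxx.
Qed.

Lemma tree_vertex_inj : injective tree_vertex.
Proof. by move=> s t st; apply: Some_inj; rewrite -!tree_vertexK st. Qed.

Lemma tree_labelK x s : tree_label v x = Some s -> tree_vertex s = x.
Proof.
rewrite /tree_label /tree_vertex; case: split_ordP => [a -> | k ->].
  by case: eqP => // -> [<-]; rewrite unlift_none.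
by case=> <-; rewrite liftK.
Qed.

Lemma psd_preserving_attach I f : admissible I f -> irreflexive T ->
  psd_preserving I f G -> psd_preserving I f T -> psd_preserving I f (attach G T v).
Proof.
move=> fA iT fG fT.
pose inG (x : 'I_(n + m)) := if split x is inl _ then true else false.
pose inT (x : 'I_(n + m)) := tree_label v x != None.
apply: (@psd_preserving_onesum _ (lshift m v) _ inG inT).
- by move=> x; rewrite /inG /inT /tree_label; case: split_ordP.
- move=> x; rewrite /inG /inT /tree_label; case: split_ordP => [a -> _ | //].
  by case: (eqVneq a v) => [-> | //].
- by rewrite /inG (unsplitK (inl v)).
- by rewrite /inT /tree_label (unsplitK (inl v)) eqxx.
- move=> x y _ /orP[]; first by rewrite /inG; case: (split x); case: (split y).
  by rewrite /inT; case: (tree_label v x); case: (tree_label v y) => // ? ? ?; rewrite orbT.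
- exact: adm0 fA.
- exact: adm_superadd fA.
- exact: adm_dom fA.
- apply: (psd_preserving_cover (@lshift_inj _ _) (adm0 fA) (adm_ge0 fA) _ fG).
  move=> x y xy /and3P[]; rewrite /inG /attach /tree_label.
  case: split_ordP => a -> //; case: split_ordP => b -> // + _ _.
  case/orP => [Gab | ]; first by exists a, b.
  by case: (eqVneq a v) => // ->; case: (eqVneq b v) => // ->; rewrite iT.
apply: (psd_preserving_cover tree_vertex_inj (adm0 fA) (adm_ge0 fA) _ fT).
move=> x y xy /and3P[Axy]; rewrite /inT.
case Lx: (tree_label v x) => [s|] // _; case Ly: (tree_label v y) => [t|] // _.
exists s, t; rewrite (tree_labelK Lx) (tree_labelK Ly); split=> //.
move: Axy; rewrite /attach Lx Ly => /orP[Gxy | //].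
move: Lx Ly xy Gxy; rewrite /tree_label.
case: split_ordP => a -> //; case: split_ordP => b -> //.
by case: (eqVneq a v) => // ->; case: (eqVneq b v) => // ->; rewrite eqxx.
Qed.

Lemma psd_preserving_attach_sub I f :
  I 0 -> psd_preserving I f (attach G T v) -> psd_preserving I f G.
Proof.
move=> I0; apply: (psd_preserving_sub (@lshift_inj _ _) I0) => a b Gab.
by rewrite /attach !(unsplitK (inl _)) Gab.
Qed.

End Attach.

Lemma psd_preserving_obtained n' (G' : rel 'I_n') n (G : rel 'I_n) I f :
  admissible I f -> obtained G' G -> psd_preserving I f G' -> psd_preserving I f G.
Proof.
move=> fA; elim=> // {}n {}G m T v ob IH _ [[sT iT] _ aT] /IH fG.
exact: psd_preserving_attach fA iT fG (psd_preserving_forest fA (conj sT iT) aT).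
Qed.

Lemma psd_preserving_obtained_sub n' (G' : rel 'I_n') n (G : rel 'I_n) I f :
  I 0 -> obtained G' G -> psd_preserving I f G -> psd_preserving I f G'.
Proof.
move=> I0; elim=> // {}n {}G m T v ob IH _ _ fG.
exact/IH/(psd_preserving_attach_sub I0 fG).
Qed.

Lemma psd_preserving_to_rpow I f n (G : rel 'I_n) a :
  (forall x, 0 <= x -> I x) -> (forall x, 0 <= x -> f x = rpow x a) ->
  psd_preserving I f G -> psd_preserving [set x | 0 <= x] (rpow ^~ a) G.
Proof.
move=> I_ge0 f_rpow fG A GA; have [pA A_ge0 A0] := GA.
have -> : map_mx (rpow ^~ a) A = map_mx f A.
  by apply/matrixP => i j; rewrite !mxE f_rpow //; apply: A_ge0.
by apply: fG; split=> // i j; apply/I_ge0/A_ge0.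
Qed.

Lemma tree_has_P3 n (T : rel 'I_n) : is_tree T -> (3 <= n)%N -> has_P3 T.
Proof.
move=> [[sT iT] cT _] n3.
have adj_or_P3 x y : x != y -> T x y \/ has_P3 T.
  move=> xy; case/connectP: (cT x y) => p pT yE; move: yE.
  case/shortenP: pT => [[|a [|b r]]] pT up _ yE.
  - by rewrite yE eqxx in xy.
  - by left; move: pT; rewrite /= yE andbT.
  right; exists a, x, b; move: pT up => /= /and3P[Txa Tab _] /andP[xabr _].
  split=> //; last by rewrite sT.
  by apply: contraNneq xabr => ->; rewrite !inE eqxx orbT.
pose x0 : 'I_n := Ordinal (leq_trans (isT : 0 < 3)%N n3).
pose x1 : 'I_n := Ordinal (leq_trans (isT : 1 < 3)%N n3).
pose x2 : 'I_n := Ordinal (leq_trans (isT : 2 < 3)%N n3).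
have [T01 | //] := adj_or_P3 x0 x1 isT.
have [T02 | //] := adj_or_P3 x0 x2 isT.
by exists x0, x1, x2.
Qed.

Lemma psd_preserving_set (I : set RR) (F : RR -> RR -> RR) n (G : rel 'I_n) :
  (forall a, F a 0 = 0) ->
  [set a | forall A, PG G I A -> PG G setT (map_mx (F a) A)]
  = [set a | psd_preserving I (F a) G].
Proof. by move=> F0; apply/funext => a; apply/propext/psd_preservingE. Qed.

Lemma H_E n (G : rel 'I_n) : H_ G = [set a | psd_preserving [set x | 0 <= x] (rpow ^~ a) G].
Proof. exact: psd_preserving_set rpow0. Qed.

Lemma Hphi_E n (G : rel 'I_n) : Hphi G = [set a | psd_preserving setT (phi_ a) G].
Proof. by apply: psd_preserving_set => a; rewrite /phi_ normr0 rpow0. Qed.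

Lemma Hpsi_E n (G : rel 'I_n) : Hpsi G = [set a | psd_preserving setT (psi_ a) G].
Proof. by apply: psd_preserving_set => a; rewrite /psi_ sgr0 mul0r. Qed.

Section PowerFamily.
Variables (I : set RR) (F : RR -> RR -> RR).
Hypotheses (I_ge0 : forall x, 0 <= x -> I x)
           (F_adm : forall a, 1 <= a -> admissible I (F a))
           (F_rpow : forall a x, 0 <= x -> F a x = rpow x a).

Lemma psd_preserving_family_ge1 n (G : rel 'I_n) a :
  simple_graph G -> has_P3 G -> psd_preserving I (F a) G -> 1 <= a.
Proof.
by move=> sG P3 /(psd_preserving_to_rpow I_ge0 (F_rpow a)); apply: rpow_P3_ge1.
Qed.

Lemma family_obtainedE n' (G' : rel 'I_n') n (G : rel 'I_n) :
  simple_graph G' -> has_P3 G' -> obtained G' G ->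
  [set a | psd_preserving I (F a) G] = [set a | psd_preserving I (F a) G'].
Proof.
move=> sG' P3 ob; apply/funext => a; apply/propext; split.
  exact: psd_preserving_obtained_sub (I_ge0 (lexx 0)) ob.
move=> fG'; have a_ge1 := psd_preserving_family_ge1 sG' P3 fG'.
exact: psd_preserving_obtained (F_adm a_ge1) ob fG'.
Qed.

Lemma family_tree_CE n (T : rel 'I_n) : is_tree T -> (3 <= n)%N ->
  is_min (CEset [set a | psd_preserving I (F a) T]) 1.
Proof.
move=> tT n3; have [sT _ aT] := tT; split=> [b b_ge1 | a /(_ a (lexx a))].
  exact: psd_preserving_forest (F_adm b_ge1) sT aT.
exact: psd_preserving_family_ge1 sT (tree_has_P3 tT n3).
Qed.

End PowerFamily.

Theorem theorem2p2 :
  (forall (n' : nat) (G' : rel 'I_n'),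
     simple_graph G' ->
     (* G' is not a disjoint union of copies of K_1 and K_2,
        i.e. some vertex has two distinct neighbours *)
     (exists v u w : 'I_n', [/\ u != w, G' v u & G' v w]) ->
     forall (n : nat) (G : rel 'I_n), obtained G' G ->
       [/\ H_ G = H_ G', Hpsi G = Hpsi G' & Hphi G = Hphi G'])
  /\
  (forall (n : nat) (T : rel 'I_n), is_tree T -> (3 <= n)%N ->
     [/\ is_min (CEset (H_ T)) 1, is_min (CEset (Hphi T)) 1
       & is_min (CEset (Hpsi T)) 1]).
Proof.
split=> [n' G' sG' P3 n G ob | n T tT n3]; rewrite !H_E !Hphi_E !Hpsi_E.
  split; [exact: (family_obtainedE (fun _ => id) admissible_rpow (fun _ _ _ => erefl))
         | exact: (family_obtainedE (fun _ _ => Logic.I) admissible_psi psi_rpow)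
         | exact: (family_obtainedE (fun _ _ => Logic.I) admissible_phi phi_rpow)].
split; [exact: (family_tree_CE (fun _ => id) admissible_rpow (fun _ _ _ => erefl))
       | exact: (family_tree_CE (fun _ _ => Logic.I) admissible_phi phi_rpow)
       | exact: (family_tree_CE (fun _ _ => Logic.I) admissible_psi psi_rpow)].
Qed.
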